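(* Let $X$ be a Euclidean polyhedral space, $U\subset X$ an open subset, $\Pi$ a polyhedral complex on $X$, $f,g$ piecewise affine functions on $U$ defined on $\Pi$, and $c$ a $k$-dimensional weight on $\Pi|_U$. Then $f\cdot(g\cdot c)=g\cdot(f\cdot c)$.
   Context: Polyhedral spaces. Let $X$ be a second countable topological space. A polyhedral structure $\Pi$ on $X$ is a locally finite covering of $X$ by distinct closed subsets $\sigma$ (the polyhedra of $\Pi$), each equipped with a finite-dimensional vector space $M_\sigma$ of continuous real functions on $\sigma$ such that, with $N_\sigma=\operatorname{Hom}(M_\sigma,\mathbb{R})$, the evaluation map $\phi_\sigma\colon\sigma\to N_\sigma$ is a homeomorphism onto a full-dimensional convex polyhedron of an affine hyperplane $H_\sigma\subset N_\sigma$ not containing $0$. Faces of $\sigma$ are the preimages under $\phi_\sigma$ of faces of $\phi_\sigma(\sigma)$ (the empty set is a face). One requires that every face of a polyhedron of $\Pi$ is a polyhedron of $\Pi$ whose function space consists of the restrictions of the functions in $M_\sigma$, and that any two polyhedra intersect in a common face. Via $\phi_\sigma$, each polyhedron inherits an affine structure (its affine functions are the elements of $M_\sigma$), a dimension, faces, facets (codimension-one faces), and a relative interior. $\Pi'$ is a subdivision of $\Pi$ if every polyhedron of $\Pi'$ is contained in a polyhedron of $\Pi$ with affine inclusion; two structures are equivalent if they have a common subdivision. A polyhedral space is $X$ with an equivalence class of polyhedral structures; a polyhedral complex on $X$ is a member of this class. We write $\tau\prec\sigma$ (or $\sigma\succ\tau$) if $\tau$ is a face of $\sigma$. Euclidean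 polyhedral spaces. A Euclidean polyhedral space is a polyhedral space $X$ together with a finite-dimensional real vector space $N_X$ with a Euclidean inner product and a map $\iota\colon X\to N_X$ whose image lies in an affine hyperplane $H_X$ not containing $0$, such that there is a polyhedral complex on $X$ on each of whose polyhedra $\iota$ is injective and affine; only polyhedral complexes with this property are called polyhedral complexes on $X$. For $\sigma\in\Pi$ and a nonempty facet $\tau$ of $\sigma$, $v_{\sigma\setminus\tau}\in N_X$ denotes the unit vector orthogonal to the affine span of $\iota(\tau)$, parallel to the affine span of $\iota(\sigma)$, and pointing from $\iota(\tau)$ towards $\iota(\sigma)$. Weights and products. For $U\subset X$ open, $\Pi|_U$ is the set of polyhedra of $\Pi$ meeting $U$ and $\Pi|_U(k)$ the set of those of dimension $k$. A $k$-dimensional weight on $\Pi|_U$ is a map $c\colon\Pi|_U(k)\to\mathbb{R}$ (extended by $0$ on polyhedra of other dimensions). A piecewise affine function on $U$ defined on $\Pi$ is a function $f\colon U\to\mathbb{R}$ such that for every $\sigma\in\Pi|_U$, $f|_{\sigma\cap U}$ is the restriction of an affine function on $\sigma$; one then chooses linear functions $f_\sigma\colon N_X\to\mathbb{R}$ with $f=f_\sigma\circ\iota$ on $\sigma\cap U$. The product $f\cdot c$ is the $(k-1)$-dimensional weight on $\Pi|_U$ given for $\tau\in\Pi|_U(k-1)$ by $(f\cdot c)(\tau)=-\sum_{\sigma\in\Pi|_U(k),\,\sigma\succ\tau}c(\sigma)\,f_\sigma(v_{\sigma\setminus\tau})$ (this does not depend on the choice of the $f_\sigma$). *)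

From HB Require Import structures.
From mathcomp Require Import all_boot all_order all_algebra.
From mathcomp Require Import all_classical all_reals all_analysis.
Set Implicit Arguments.
Unset Strict Implicit.
Unset Printing Implicit Defensive.
Import Order.TTheory GRing.Theory Num.Theory numFieldNormedType.Exports.
Local Open Scope ring_scope.
Local Open Scope classical_set_scope.

(** The ambient Euclidean space N_X is modelled as 'rV[R]_n, with a Euclidean
    inner product given by a symmetric positive definite Gram matrix [Gm]. *)
Section Linear.
Context {R : realType} {n : nat}.
Local Notation V := 'rV[R]_n.

Definition ip (Gm : 'M[R]_n) (u v : V) : R := (u *m Gm *m v^T) 0 0.

Definition is_inner_product (Gm : 'M[R]_n) : Prop :=
  Gm^T = Gm /\ forall v : V, v != 0 -> 0 < ip Gm v v.

(** the linear functional on N_X with coefficient vector a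
    (every linear functional N_X -> R is of this form) *)
Definition lin (a v : V) : R := \sum_(i < n) a 0 i * v 0 i.

Definition is_polyhedron (P : set V) : Prop :=
  exists s : seq (V * R), P = [set x | forall p, p \in s -> lin p.1 x <= p.2].

(** faces of a convex polyhedron (the empty set and P itself included) *)
Definition is_face_of (P F : set V) : Prop :=
  exists (a : V) (b : R), (forall x, P x -> lin a x <= b) /\
                         F = P `&` [set x | lin a x = b].

(** linear subspace parallel to the affine span of S *)
Definition dir (S : set V) : set V :=
  [set v | exists s : seq (R * V * V),
     (forall p, p \in s -> S p.1.2 /\ S p.2) /\
     v = \sum_(p <- s) p.1.1 *: (p.1.2 - p.2)].

Definition has_dim (S : set V) (d : nat) : Prop :=
  exists M : 'M[R]_(d, n), row_free M /\ (forall i, dir S (row i M)) /\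
                           (forall v, dir S v -> (v <= M)%MS).
End Linear.

Section Complex.
Context {R : realType} {n : nat} {X : topologicalType}.
Local Notation V := 'rV[R]_n.
Variable iota : X -> V.

Definition faceX (s t : set X) : Prop :=
  exists F, is_face_of (iota @` s) F /\ t = s `&` (iota @^-1` F).

Definition dimX (s : set X) (d : nat) : Prop := has_dim (iota @` s) d.

Definition facet (t s : set X) : Prop :=
  faceX s t /\ t !=set0 /\ exists d, dimX t d /\ dimX s d.+1.

(** Pi is a polyhedral complex on X on each of whose polyhedra iota is
    injective and affine (the function space M_sigma of sigma being the
    pull-backs of linear functionals on N_X). *)
Definition euclidean_polyhedral_complex (Pi : set (set X)) : Prop :=
  [/\ (forall x, exists s, Pi s /\ s x) /\
      (forall x, exists W, [/\ open W, W x &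
                   finite_set [set s | Pi s /\ s `&` W !=set0]]),
      (forall s, Pi s -> closed s),
      (forall s, Pi s ->
         [/\ is_polyhedron (iota @` s),
             (forall x y, s x -> s y -> iota x = iota y -> x = y),
             {within s, continuous iota} &
             exists g : V -> X, (forall x, s x -> g (iota x) = x) /\
                                {within iota @` s, continuous g}]),
      (forall s F, Pi s -> is_face_of (iota @` s) F -> Pi (s `&` (iota @^-1` F))) &
      (forall s t, Pi s -> Pi t -> faceX s (s `&` t) /\ faceX t (s `&` t))].

(** Euclidean polyhedral space structure: X second countable, Gm a Euclidean
    inner product, and iota(X) contained in an affine hyperplane
    {y | lin a y = 1} not containing 0. *)
Definition euclidean_space_data (Gm : 'M[R]_n) : Prop :=
  [/\ @second_countable X, is_inner_product Gm &
      exists a : V, forall x, lin a (iota x) = 1].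

Definition restr (Pi : set (set X)) (U : set X) (s : set X) : Prop :=
  Pi s /\ s `&` U !=set0.

Definition is_normal_vector (Gm : 'M[R]_n) (s t : set X) (v : V) : Prop :=
  [/\ dir (iota @` s) v,
      (forall w, dir (iota @` t) w -> ip Gm v w = 0),
      ip Gm v v = 1 &
      exists x y, [/\ s x, t y & 0 < ip Gm v (iota x - iota y)]].

Definition is_weight (Pi : set (set X)) (U : set X) (k : nat) (c : set X -> R) :=
  forall s, restr Pi U s -> ~ dimX s k -> c s = 0.

Definition piecewise_affine (Pi : set (set X)) (U : set X) (f : X -> R) :=
  forall s, restr Pi U s -> exists a : V, forall x, s x -> U x -> f x = lin a (iota x).

Definition linear_choice (Pi : set (set X)) (U : set X) (f : X -> R) (Fa : set X -> V) :=
  forall s, restr Pi U s -> forall x, s x -> U x -> f x = lin (Fa s) (iota x).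

Definition wprod (Pi : set (set X)) (U : set X) (nu : set X -> set X -> V)
    (k : nat) (Fa : set X -> V) (c : set X -> R) (t : set X) : R :=
  - (\sum_(s \in [set s | [/\ restr Pi U s, dimX s k & facet t s]])
       c s * lin (Fa s) (nu s t)).
End Complex.

From HB Require Import structures.
From mathcomp Require Import all_boot all_order all_algebra finmap.
From mathcomp Require Import all_classical all_reals all_analysis.
From mathcomp Require Import ring lra.
Import Order.TTheory GRing.Theory Num.Theory numFieldNormedType.Exports.
Local Open Scope ring_scope.
Local Open Scope classical_set_scope.
Set Implicit Arguments.
Unset Strict Implicit.
Unset Printing Implicit Defensive.

(* Expanding both products, (f.(g.c))(t) is a sum over flags t < s < r of
   c(r) g_r(v_{r\s}) f_s(v_{s\t}), and f_s may be replaced by f_r on the span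
   of s, since two affine functions agreeing on a nonempty open part of a
   polyhedron agree on its affine span.  For fixed r and t of codimension two,
   exactly two facets s1, s2 of r contain t.  In the plane of r orthogonal to
   t, with orthonormal basis u1 = v_{s1\t}, n1 = v_{r\s1}, the second facet has
   v_{s2\t} = l (x u1 + n1) and v_{r\s2} = l (u1 - x n1) with l^2 (1 + x^2) = 1,
   so v_{r\s1} (x) v_{s1\t} + v_{r\s2} (x) v_{s2\t} is a symmetric tensor: the
   contribution of r is symmetric in f and g. *)

Section InnerProduct.
Context {R : realType} {n : nat}.
Local Notation V := 'rV[R]_n.

Lemma linD (a u v : V) : lin a (u + v) = lin a u + lin a v.
Proof. by rewrite /lin -big_split; apply: eq_bigr => i _; rewrite mxE mulrDr. Qed.

Lemma linZ (a u : V) (r : R) : lin a (r *: u) = r * lin a u.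
Proof. by rewrite /lin mulr_sumr; apply: eq_bigr => i _; rewrite mxE mulrCA. Qed.

Lemma linN (a u : V) : lin a (- u) = - lin a u.
Proof. by rewrite -scaleN1r linZ mulN1r. Qed.

Lemma linB (a u v : V) : lin a (u - v) = lin a u - lin a v.
Proof. by rewrite linD linN. Qed.

Lemma linDl (a b u : V) : lin (a + b) u = lin a u + lin b u.
Proof. by rewrite /lin -big_split; apply: eq_bigr => i _; rewrite mxE mulrDl. Qed.

Lemma lin_suml (v : V) (I : Type) (r : seq I) (F : I -> V) :
  lin (\sum_(i <- r) F i) v = \sum_(i <- r) lin (F i) v.
Proof.
elim: r => [|x r IH]; last by rewrite !big_cons linDl IH.
by rewrite !big_nil /lin big1 // => i _; rewrite mxE mul0r.
Qed.

Variable Gm : 'M[R]_n.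

Lemma ipD (u v w : V) : ip Gm u (v + w) = ip Gm u v + ip Gm u w.
Proof. by rewrite /ip linearD /= mulmxDr mxE. Qed.

Lemma ipZ (u v : V) (r : R) : ip Gm u (r *: v) = r * ip Gm u v.
Proof. by rewrite /ip linearZ /= -scalemxAr mxE. Qed.

Lemma ip0 (u : V) : ip Gm u 0 = 0.
Proof. by rewrite -(scale0r (0 : V)) ipZ mul0r. Qed.

Lemma ipN (u v : V) : ip Gm u (- v) = - ip Gm u v.
Proof. by rewrite -scaleN1r ipZ mulN1r. Qed.

Lemma ip_sum (u : V) (I : Type) (r : seq I) (F : I -> V) :
  ip Gm u (\sum_(i <- r) F i) = \sum_(i <- r) ip Gm u (F i).
Proof.
elim: r => [|x r IH]; first by rewrite !big_nil ip0.
by rewrite !big_cons ipD IH.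
Qed.

Hypothesis Gsym : Gm^T = Gm.

Lemma ipC (u v : V) : ip Gm u v = ip Gm v u.
Proof.
rewrite /ip; transitivity (((u *m Gm *m v^T)^T) 0 0); first by rewrite [RHS]mxE.
by rewrite !trmx_mul trmxK Gsym mulmxA.
Qed.

Lemma ipDl (u v w : V) : ip Gm (u + v) w = ip Gm u w + ip Gm v w.
Proof. by rewrite ipC ipD !(ipC w). Qed.

Lemma ipZl (u v : V) (r : R) : ip Gm (r *: u) v = r * ip Gm u v.
Proof. by rewrite ipC ipZ ipC. Qed.

Lemma ipBl (u v w : V) : ip Gm (u - v) w = ip Gm u w - ip Gm v w.
Proof. by rewrite ipDl (ipC (- v)) ipN (ipC w v). Qed.

End InnerProduct.

Lemma subr_via (V : zmodType) (x y z : V) : x - y = (x - z) + (z - y).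
Proof. by rewrite subrKA. Qed.

Section Direction.
Context {R : realType} {n : nat}.
Local Notation V := 'rV[R]_n.
Implicit Types S T : set V.

Lemma dir_diff S x y : S x -> S y -> dir S (x - y).
Proof.
move=> Sx Sy; exists [:: (1, x, y)]; split; last by rewrite big_seq1 scale1r.
by move=> p; rewrite inE => /eqP ->.
Qed.

Lemma dir0 S : dir S 0.
Proof. by exists [::]; split; [move=> p; rewrite in_nil|rewrite big_nil]. Qed.

Lemma dirD S u v : dir S u -> dir S v -> dir S (u + v).
Proof.
move=> [s1 [h1 ->]] [s2 [h2 ->]]; exists (s1 ++ s2); split; last by rewrite big_cat.
by move=> p; rewrite mem_cat => /orP[/h1|/h2].
Qed.

Lemma dirZ S r u : dir S u -> dir S (r *: u).
Proof.
move=> [s [h ->]]; exists [seq (r * p.1.1, p.1.2, p.2) | p <- s]; split.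
  by move=> p /mapP[q /h [? ?] ->].
by rewrite big_map scaler_sumr; apply: eq_bigr => p _ /=; rewrite scalerA.
Qed.

Lemma dir_sum S (I : Type) (r : seq I) (F : I -> V) :
  (forall i, dir S (F i)) -> dir S (\sum_(i <- r) F i).
Proof.
move=> h; elim: r => [|x r IH]; first by rewrite big_nil; apply: dir0.
by rewrite big_cons; apply: dirD.
Qed.

Lemma dir_mono S T : S `<=` T -> dir S `<=` dir T.
Proof. by move=> ST v [s [h ->]]; exists s; split => // p /h [/ST ? /ST ?]. Qed.

Lemma dir_additive_eq0 S (h : V -> R) :
  (forall u v, h (u + v) = h u + h v) -> (forall r u, h (r *: u) = r * h u) ->
  (forall x y, S x -> S y -> h (x - y) = 0) -> forall v, dir S v -> h v = 0.
Proof.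
move=> hD hZ hS v [s [hs ->]]; elim: s hs => [|p s IH] hs.
  by rewrite big_nil -(scale0r (0 : V)) hZ mul0r.
have [Sp1 Sp2] := hs p (mem_head _ _).
rewrite big_cons hD hZ hS // mulr0 add0r IH // => q hq.
by apply: hs; rewrite inE hq orbT.
Qed.

Lemma dir_lin_eq0 S a b : (forall x, S x -> lin a x = b) ->
  forall v, dir S v -> lin a v = 0.
Proof.
move=> h; apply: dir_additive_eq0; [exact: linD|by move=> r u; rewrite linZ|].
by move=> x y Sx Sy; rewrite linB !h // subrr.
Qed.

Lemma submx_dir S d (M : 'M[R]_(d, n)) : (forall i, dir S (row i M)) ->
  forall v, (v <= M)%MS -> dir S v.
Proof.
move=> hM v /submxP [D ->]; rewrite mulmx_sum_row; apply: dir_sum => i.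
exact: dirZ.
Qed.

Lemma has_dimP S d : has_dim S d ->
  exists M : 'M[R]_(d, n), row_free M /\ forall v, dir S v <-> (v <= M)%MS.
Proof.
move=> [M [fM [rM sM]]]; exists M; split => // v; split; first exact: sM.
exact: submx_dir.
Qed.

Lemma has_dim_uniq S d1 d2 : has_dim S d1 -> has_dim S d2 -> d1 = d2.
Proof.
move=> /has_dimP [M1 [f1 h1]] /has_dimP [M2 [f2 h2]].
have s12 : (M1 <= M2)%MS by apply/row_subP => i; apply/h2/h1; exact: row_sub.
have s21 : (M2 <= M1)%MS by apply/row_subP => i; apply/h1/h2; exact: row_sub.
by apply/eqP; rewrite eqn_leq -(eqP f1) -(eqP f2) !mxrankS.
Qed.

End Direction.

Section Orthogonal.
Context {R : realType} {n : nat}.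
Local Notation V := 'rV[R]_n.
Implicit Types S T B : set V.
Variable Gm : 'M[R]_n.

Lemma row_free_col_mx_orth S d m (M : 'M[R]_(d, n)) (E : 'M[R]_(m, n)) :
  row_free M -> (forall i, dir S (row i M)) ->
  (forall i w, dir S w -> ip Gm (row i E) w = 0) ->
  (forall i j, i != j -> ip Gm (row i E) (row j E) = 0) ->
  (forall i, 0 < ip Gm (row i E) (row i E)) -> row_free (col_mx M E).
Proof.
move=> fM rM oE oEE pE; apply: inj_row_free => v h0.
rewrite -[v]hsubmxK mul_row_col in h0 *.
set vl := lsubmx v in h0 *; set vr := rsubmx v in h0 *.
have dl : dir S (vl *m M) by apply: (submx_dir rM); exact: submxMl.
have vr0 : vr = 0.
  apply/rowP => i; rewrite mxE.
  have := congr1 (ip Gm (row i E)) h0.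
  rewrite ipD (oE _ _ dl) add0r ip0 mulmx_sum_row ip_sum (bigD1 i) //= big1.
    rewrite addr0 ipZ => /eqP; rewrite mulf_eq0 => /orP[/eqP|/eqP hh].
      by rewrite !mxE.
    by move: (pE i); rewrite hh ltxx.
  by move=> j ji; rewrite ipZ oEE ?mulr0 // eq_sym.
rewrite vr0 mul0mx addr0 in h0.
have vl0 : vl = 0 by apply: (row_free_inj fM); rewrite h0 mul0mx.
by rewrite vl0 vr0 row_mx0.
Qed.

(* A basis of dir S together with the rows of E is free, hence spans dir B
   by counting dimensions. *)
Lemma orth_decomp S B d m (E : 'M[R]_(m, n)) :
  has_dim S d -> has_dim B (d + m) -> dir S `<=` dir B ->
  (forall i, dir B (row i E)) -> (forall i w, dir S w -> ip Gm (row i E) w = 0) ->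
  (forall i j, ip Gm (row i E) (row j E) = (i == j)%:R) ->
  forall z, dir B z ->
    exists2 zS, dir S zS & z = zS + \sum_i ip Gm (row i E) z *: row i E.
Proof.
move=> /has_dimP [MS [fS hS]] /has_dimP [MB [fB hB]] SB rE oE oEE z Bz.
have fA : row_free (col_mx MS E).
  apply: (row_free_col_mx_orth fS _ oE).
  - by move=> i; apply/hS; exact: row_sub.
  - by move=> i j ij; rewrite oEE (negbTE ij).
  - by move=> i; rewrite oEE eqxx ltr01.
have sA : (col_mx MS E <= MB)%MS.
  rewrite col_mx_sub; apply/andP; split; apply/row_subP => i; apply/hB.
    by apply: SB; apply/hS; exact: row_sub.
  exact: rE.
have eA : (col_mx MS E == MB)%MS.
  by rewrite -(mxrank_leqif_eq sA) (eqP fA) (eqP fB).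
have /submxP [D ->] : (z <= col_mx MS E)%MS by rewrite (eqmxP eA); apply/hB.
rewrite -[D]hsubmxK mul_row_col.
have dl : dir S (lsubmx D *m MS) by apply/hS; exact: submxMl.
exists (lsubmx D *m MS) => //.
congr (_ + _); rewrite mulmx_sum_row; apply: eq_bigr => i _; congr (_ *: _).
rewrite ipD (oE _ _ dl) add0r ip_sum (bigD1 i) //= big1.
  by rewrite addr0 ipZ oEE eqxx mulr1.
by move=> j ji; rewrite ipZ oEE eq_sym (negbTE ji) mulr0.
Qed.

Lemma orth_decomp1 S B d (u : V) :
  has_dim S d -> has_dim B d.+1 -> dir S `<=` dir B ->
  dir B u -> (forall w, dir S w -> ip Gm u w = 0) -> ip Gm u u = 1 ->
  forall z, dir B z -> exists2 zS, dir S zS & z = zS + ip Gm u z *: u.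
Proof.
move=> hS hB SB Bu ou uu z Bz.
have hB' : has_dim B (d + 1) by rewrite addn1.
have [] := orth_decomp (E := u) hS hB' SB _ _ _ Bz.
- by move=> i; rewrite row_id.
- by move=> i w; rewrite row_id; apply: ou.
- by move=> i j; rewrite !row_id (ord1 i) (ord1 j) uu.
by move=> zS dz hz; exists zS; rewrite // big_ord1 row_id in hz.
Qed.

Lemma has_dim_orth_ext T S d (q : V) (r : V -> R) :
  has_dim T d -> dir T `<=` dir S -> dir S q ->
  (forall w, dir T w -> ip Gm q w = 0) -> 0 < ip Gm q q ->
  (forall z, dir S z -> exists2 zT, dir T zT & z = zT + r z *: q) ->
  has_dim S d.+1.
Proof.
move=> /has_dimP [MT [fT hT]] TS Sq oq qq hz.
suff : has_dim S (d + 1) by rewrite addn1.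
have sub1 : (MT <= col_mx MT q)%MS by rewrite -addsmxE addsmxSl.
have sub2 : (q <= col_mx MT q)%MS by rewrite -addsmxE addsmxSr.
have inS : forall v, (v <= col_mx MT q)%MS -> dir S v.
  move=> v /submxP [D ->]; rewrite -[D]hsubmxK mul_row_col; apply: dirD.
    by apply: TS; apply/hT; exact: submxMl.
  by rewrite mulmx_sum_row big_ord1 row_id; apply: dirZ.
exists (col_mx MT q); split; [|split].
- apply: (row_free_col_mx_orth fT).
  + by move=> i; apply/hT; exact: row_sub.
  + by move=> i w; rewrite row_id; apply: oq.
  + by move=> i j; rewrite (ord1 i) (ord1 j) eqxx.
  + by move=> i; rewrite row_id.
- by move=> i; apply: inS; exact: row_sub.
- move=> z /hz [zT dT ->]; apply: addmx_sub; last exact: scalemx_sub.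
  by apply: submx_trans sub1; apply/hT.
Qed.

Hypothesis Gip : is_inner_product Gm.
Let Gsym : Gm^T = Gm. Proof. by case: Gip. Qed.
Let Gpos : forall v : V, v != 0 -> 0 < ip Gm v v. Proof. by case: Gip. Qed.

Lemma ip_self_eq0 (v : V) : ip Gm v v = 0 -> v = 0.
Proof. by move=> h; apply/eqP; apply: contraT => /Gpos; rewrite h ltxx. Qed.

Lemma dir_orth_eq0 S (v w q : V) (r : R) : dir S w ->
  (forall z, dir S z -> ip Gm v z = 0) -> (forall z, dir S z -> ip Gm q z = 0) ->
  v = w + r *: q -> w = 0.
Proof.
move=> Sw ov oq hv; apply: ip_self_eq0.
have e : w = v - r *: q by rewrite hv addrK.
by rewrite {1}e (ipBl Gsym) (ipZl Gsym) (ov _ Sw) (oq _ Sw) mulr0 subrr.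
Qed.

Lemma orth_decomp2 S B d (u v : V) :
  has_dim S d -> has_dim B d.+2 -> dir S `<=` dir B ->
  dir B u -> dir B v -> (forall w, dir S w -> ip Gm u w = 0) ->
  (forall w, dir S w -> ip Gm v w = 0) -> ip Gm u u = 1 -> ip Gm v v = 1 ->
  ip Gm u v = 0 ->
  forall z, dir B z ->
    exists2 zS, dir S zS & z = zS + ip Gm u z *: u + ip Gm v z *: v.
Proof.
move=> hS hB SB Bu Bv ou ov uu vv uv z Bz.
have hB' : has_dim B (d + 2) by rewrite addn2.
pose E : 'M[R]_(1 + 1, n) := col_mx u v.
have r0 : row (lshift 1 0) E = u by rewrite rowKu row_id.
have r1 : row (rshift 1 0) E = v by rewrite rowKd row_id.
have ci : forall i : 'I_(1 + 1), i = lshift 1 0 \/ i = rshift 1 0.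
  by case => [[|[|k]] hi]; [left; apply/val_inj|right; apply/val_inj|].
have rE : forall i, row i E = u \/ row i E = v.
  by move=> i; case: (ci i) => ->; [left|right].
have [] := orth_decomp (E := E) hS hB' SB _ _ _ Bz.
- by move=> i; case: (rE i) => ->.
- by move=> i w; case: (rE i) => ->; [apply: ou|apply: ov].
- move=> i j; case: (ci i) => ->; case: (ci j) => ->;
  by rewrite ?r0 ?r1 ?uu ?vv ?uv ?(ipC Gsym v u) ?uv.
move=> zS dz hz; exists zS => //.
by rewrite big_split_ord !big_ord1 r0 r1 addrA in hz.
Qed.

End Orthogonal.

Section Polyhedron.
Context {R : realType} {n : nat}.
Local Notation V := 'rV[R]_n.
Implicit Types S T B F : set V.

Definition halfspaces (L : seq (V * R)) : set V :=
  [set x | forall p, p \in L -> lin p.1 x <= p.2].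

Lemma halfspaces_inward_small (L : seq (V * R)) y w : halfspaces L y ->
  (forall p, p \in L -> lin p.1 y = p.2 -> lin p.1 w <= 0) ->
  exists2 e : R, 0 < e & forall e', 0 < e' <= e -> halfspaces L (y + e' *: w).
Proof.
elim: L => [|p L IH] hy hw; first by exists 1 => // e' _ p; rewrite in_nil.
have [e0 e0p he0] : exists2 e : R, 0 < e &
    forall e', 0 < e' <= e -> halfspaces L (y + e' *: w).
  by apply: IH => q hq; [apply: hy|apply: hw]; rewrite inE hq orbT.
have hp : p \in p :: L by rewrite mem_head.
have [e1 e1p he1] : exists2 e : R, 0 < e & forall e', 0 < e' <= e ->
    lin p.1 (y + e' *: w) <= p.2.
  have := hy p hp; rewrite le_eqVlt => /orP[/eqP act|lt].
    exists 1 => // e' /andP[e'p _]; rewrite linD linZ act.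
    have := hw p hp act; nra.
  have [wle|wgt] := lerP (lin p.1 w) 0.
    by exists 1 => // e' /andP[e'p _]; rewrite linD linZ; nra.
  exists ((p.2 - lin p.1 y) / lin p.1 w); first by apply: divr_gt0; lra.
  by move=> e' /andP[e'p]; rewrite ler_pdivlMr // linD linZ; lra.
exists (Order.min e0 e1); first by rewrite lt_min e0p e1p.
move=> e' /andP[e'p]; rewrite le_min => /andP[h0 h1] q.
by rewrite inE => /orP[/eqP ->|hq]; [apply: he1|apply: he0]; rewrite ?e'p.
Qed.

Lemma halfspaces_inward (L : seq (V * R)) y w : halfspaces L y ->
  (forall p, p \in L -> lin p.1 y = p.2 -> lin p.1 w <= 0) ->
  exists2 e : R, 0 < e & halfspaces L (y + e *: w).
Proof.
move=> hy hw; have [e ep he] := halfspaces_inward_small hy hw.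
by exists e => //; apply: he; rewrite ep lexx.
Qed.

Variable Gm : 'M[R]_n.

Definition unit_normal S T v := [/\ dir S v, (forall w, dir T w -> ip Gm v w = 0),
  ip Gm v v = 1 & exists x y, [/\ S x, T y & 0 < ip Gm v (x - y)]].

Lemma face_lin_normal B F phi b d v : (forall x, B x -> lin phi x <= b) ->
  F = B `&` [set x | lin phi x = b] -> has_dim F d -> has_dim B d.+1 ->
  unit_normal B F v -> exists2 k : R, k < 0 &
    forall x y, B x -> F y -> lin phi x - b = k * ip Gm v (x - y).
Proof.
move=> hphi hF dF dB [Bv ov vv [x0 [y0 [Bx0 Fy0 p0]]]].
have FB : F `<=` B by rewrite hF => x [].
have Fb : forall x, F x -> lin phi x = b by rewrite hF => x [].
have eq x y : B x -> F y -> lin phi x - b = lin phi v * ip Gm v (x - y).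
  move=> Bx Fy; have [w dw hw] :=
    orth_decomp1 dF dB (dir_mono FB) Bv ov vv (dir_diff Bx (FB _ Fy)).
  have : lin phi (x - y) = lin phi w + ip Gm v (x - y) * lin phi v.
    by rewrite {1}hw linD linZ.
  by rewrite (dir_lin_eq0 Fb dw) add0r linB (Fb _ Fy) mulrC.
exists (lin phi v) => //; rewrite lt_neqAle; apply/andP; split.
  apply/eqP => k0; have := eq _ _ Bx0 Fy0; rewrite k0 mul0r => /eqP.
  rewrite subr_eq0 => /eqP h; have Fx0 : F x0 by rewrite hF.
  by move: p0; rewrite (ov _ (dir_diff Fx0 Fy0)) ltxx.
by have := eq _ _ Bx0 Fy0; have := hphi _ Bx0; nra.
Qed.

Lemma unit_normal_ip_ge0 B F phi b d v : (forall x, B x -> lin phi x <= b) ->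
  F = B `&` [set x | lin phi x = b] -> has_dim F d -> has_dim B d.+1 ->
  unit_normal B F v -> forall x y, B x -> F y -> 0 <= ip Gm v (x - y).
Proof.
move=> hphi hF dF dB nv; have [k k0 hk] := face_lin_normal hphi hF dF dB nv.
by move=> x y Bx Fy; have := hk _ _ Bx Fy; have := hphi _ Bx; nra.
Qed.

Lemma lin_eq0_on_span A T a v (r : V -> R) : lin a v = 0 ->
  (forall w, dir T w -> lin a w = 0) ->
  (forall z, dir A z -> exists2 w, dir T w & z = w + r z *: v) ->
  forall z, dir A z -> lin a z = 0.
Proof.
move=> av aT hA z /hA [w Tw ->].
by rewrite linD linZ av aT // mulr0 addr0.
Qed.

Lemma face_sub A P S psi c y : A `<=` P -> A y ->
  S = P `&` [set x | lin psi x = c] -> S y ->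
  (forall z, dir A z -> lin psi z = 0) -> A `<=` S.
Proof.
move=> AP Ay -> [_ /= psiy] hA z Az; split; first exact: AP.
by apply/eqP; rewrite /= -psiy -subr_eq0 -linB hA //; apply: dir_diff.
Qed.

End Polyhedron.

Lemma seq_argmax (R : realDomainType) (T : eqType) (s : seq T) (h : T -> R) :
  s != [::] -> exists2 j, j \in s & forall p, p \in s -> h p <= h j.
Proof.
elim: s => [//|x s IH] _; have [->|ne] := eqVneq s [::].
  by exists x; rewrite ?mem_head // => p; rewrite inE => /eqP ->.
have [j js hj] := IH ne; have [le|lt] := lerP (h x) (h j).
  by exists j; [rewrite inE js orbT|move=> p; rewrite inE => /orP[/eqP ->|/hj]].
exists x; first by rewrite mem_head.
by move=> p; rewrite inE => /orP[/eqP ->//|/hj/le_trans]; apply; apply: ltW.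
Qed.

Section CodimTwo.
Context {R : realType} {n : nat}.
Local Notation V := 'rV[R]_n.
Variable Gm : 'M[R]_n.
Hypothesis Gip : is_inner_product Gm.
Let Gsym : Gm^T = Gm. Proof. by case: Gip. Qed.

Variables (L : seq (V * R)) (P S1 T : set V) (d : nat) (psi phi u1 n1 : V) (c b : R).
Hypothesis hP : P = halfspaces L.
Hypothesis hpsi : forall x, P x -> lin psi x <= c.
Hypothesis hS1 : S1 = P `&` [set x | lin psi x = c].
Hypothesis hphi : forall x, S1 x -> lin phi x <= b.
Hypothesis hT : T = S1 `&` [set x | lin phi x = b].
Hypothesis dT : has_dim T d.
Hypothesis dS1 : has_dim S1 d.+1.
Hypothesis dP : has_dim P d.+2.
Hypothesis nu1 : unit_normal Gm S1 T u1.
Hypothesis nn1 : unit_normal Gm P S1 n1.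

Let PL z : P z -> forall p, p \in L -> lin p.1 z <= p.2. Proof. by rewrite hP. Qed.
Let halfspacesP z : halfspaces L z -> P z. Proof. by rewrite hP. Qed.
Let S1P : S1 `<=` P. Proof. by rewrite hS1 => x []. Qed.
Let TS1 : T `<=` S1. Proof. by rewrite hT => x []. Qed.
Let TP : T `<=` P. Proof. by move=> x /TS1 /S1P. Qed.
Let S1c x : S1 x -> lin psi x = c. Proof. by rewrite hS1 => -[]. Qed.
Let Tb x : T x -> lin phi x = b. Proof. by rewrite hT => -[]. Qed.
Let u1S1 : dir S1 u1. Proof. by case: nu1. Qed.
Let u1T w : dir T w -> ip Gm u1 w = 0. Proof. by case: nu1 => _ + _ _; apply. Qed.
Let u1u1 : ip Gm u1 u1 = 1. Proof. by case: nu1. Qed.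
Let n1P : dir P n1. Proof. by case: nn1. Qed.
Let n1S1 w : dir S1 w -> ip Gm n1 w = 0. Proof. by case: nn1 => _ + _ _; apply. Qed.
Let n1n1 : ip Gm n1 n1 = 1. Proof. by case: nn1. Qed.
Let n1T w : dir T w -> ip Gm n1 w = 0. Proof. by move/(dir_mono TS1)/n1S1. Qed.

Lemma u1_ip_ge0 x y : S1 x -> T y -> 0 <= ip Gm u1 (x - y).
Proof. exact: (unit_normal_ip_ge0 hphi hT dT dS1 nu1). Qed.

Lemma n1_ip_ge0 x y : P x -> S1 y -> 0 <= ip Gm n1 (x - y).
Proof. exact: (unit_normal_ip_ge0 hpsi hS1 dS1 dP nn1). Qed.

Lemma ip_u1n1 : ip Gm u1 n1 = 0.
Proof. by rewrite (ipC Gsym) n1S1. Qed.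

Lemma dirP_decomp z : dir P z ->
  exists2 zT, dir T zT & z = zT + ip Gm u1 z *: u1 + ip Gm n1 z *: n1.
Proof.
exact: (orth_decomp2 Gip dT dP (dir_mono TP) (dir_mono S1P u1S1) n1P
  u1T n1T u1u1 n1n1 ip_u1n1).
Qed.

Lemma dirP_orthT_decomp z : dir P z -> (forall w, dir T w -> ip Gm z w = 0) ->
  z = ip Gm u1 z *: u1 + ip Gm n1 z *: n1.
Proof.
move=> Pz oz; have [zT Tz hz] := dirP_decomp Pz; rewrite -addrA in hz.
have oW w : dir T w -> ip Gm (ip Gm u1 z *: u1 + ip Gm n1 z *: n1) w = 0.
  by move=> Tw; rewrite (ipDl Gsym) !(ipZl Gsym) (u1T Tw) (n1T Tw) !mulr0 addr0.
have zT0 : zT = 0 by apply: (dir_orth_eq0 Gip (r := 1) Tz oz oW); rewrite scale1r.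
by rewrite {1}hz zT0 add0r.
Qed.

Lemma ip_span_u1n1 (a1 b1 a2 b2 : R) :
  ip Gm (a1 *: u1 + b1 *: n1) (a2 *: u1 + b2 *: n1) = a1 * a2 + b1 * b2.
Proof.
rewrite !(ipDl Gsym) !ipD !(ipZl Gsym) !ipZ u1u1 n1n1 ip_u1n1.
by rewrite (ipC Gsym n1 u1) ip_u1n1; ring.
Qed.

Lemma lin_midpoint a (x x' : V) :
  lin a (2^-1 *: (x + x')) = 2^-1 * (lin a x + lin a x').
Proof. by rewrite linZ linD. Qed.

Lemma T_midpoint x x' : T x -> T x' -> T (2^-1 *: (x + x')).
Proof.
move=> Tx Tx'; have S1x := TS1 Tx; have S1x' := TS1 Tx'.
rewrite hT; split; last by rewrite /= lin_midpoint !Tb //; field.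
rewrite hS1; split; last by rewrite /= lin_midpoint !S1c //; field.
apply: halfspacesP => p hp; rewrite lin_midpoint.
by have := PL (S1P S1x) hp; have := PL (S1P S1x') hp; lra.
Qed.

Lemma exists_relint_T y0 : T y0 -> exists y, T y /\ forall p, p \in L ->
  (forall x, T x -> lin p.1 x = p.2) \/ lin p.1 y < p.2.
Proof.
move=> Ty0.
suff : forall L' : seq (V * R), {subset L' <= L} ->
    exists y, T y /\ forall p, p \in L' ->
    (forall x, T x -> lin p.1 x = p.2) \/ lin p.1 y < p.2 by apply.
elim => [|p L' IH] sub; first by exists y0; split => // p; rewrite in_nil.
have [|y [Ty hy]] := IH; first by move=> q hq; apply: sub; rewrite inE hq orbT.
have pL : p \in L by apply: sub; rewrite mem_head.
have [allt|] := pselect (forall x, T x -> lin p.1 x = p.2).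
  by exists y; split => // q; rewrite inE => /orP[/eqP ->|/hy]; [left|].
move=> /existsNP [x /not_implyP [Tx nx]].
have ltx : lin p.1 x < p.2.
  by rewrite lt_neqAle; apply/andP; split; [apply/eqP|apply: PL (TP Tx) _ pL].
exists (2^-1 *: (x + y)); split; first exact: T_midpoint.
move=> q; rewrite inE => /orP[/eqP ->|hq].
  by right; rewrite lin_midpoint; have := PL (TP Ty) pL; lra.
have qL : q \in L by apply: sub; rewrite inE hq orbT.
case: (hy q hq) => [h|h]; [by left|right].
by rewrite lin_midpoint; have := PL (TP Tx) qL; lra.
Qed.

Section RelativeInterior.
Variable y : V.
Hypothesis Ty : T y.
Hypothesis yrel : forall p, p \in L ->
  (forall x, T x -> lin p.1 x = p.2) \/ lin p.1 y < p.2.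

Let Py : P y. Proof. exact: TP. Qed.
Let S1y : S1 y. Proof. exact: TS1. Qed.

Lemma active_tight p : p \in L -> lin p.1 y = p.2 ->
  forall x, T x -> lin p.1 x = p.2.
Proof. by move=> pL act; case: (yrel pL) => //; rewrite act ltxx. Qed.

Lemma active_lin_dirT p : p \in L -> lin p.1 y = p.2 ->
  forall w, dir T w -> lin p.1 w = 0.
Proof. by move=> pL act; apply: dir_lin_eq0; apply: active_tight. Qed.

Lemma active_lin_dirP p z : p \in L -> lin p.1 y = p.2 -> dir P z ->
  lin p.1 z = ip Gm u1 z * lin p.1 u1 + ip Gm n1 z * lin p.1 n1.
Proof.
move=> pL act Pz; have [zT Tz hz] := dirP_decomp Pz.
by rewrite {1}hz !linD !linZ (active_lin_dirT pL act Tz) add0r.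
Qed.

Lemma active_lin_le0 p x : p \in L -> lin p.1 y = p.2 -> P x ->
  lin p.1 (x - y) <= 0.
Proof. by move=> pL act Px; rewrite linB act subr_le0; apply: PL. Qed.

Lemma active_lin_u1_le0 p : p \in L -> lin p.1 y = p.2 -> lin p.1 u1 <= 0.
Proof.
move=> pL act; case: nu1 => _ _ _ [x1 [y1 [S1x1 Ty1 pos]]].
have := active_lin_dirP pL act (dir_diff (S1P S1x1) Py).
rewrite (n1S1 (dir_diff S1x1 S1y)) mul0r addr0 (subr_via _ _ y1) ipD.
rewrite (u1T (dir_diff Ty1 Ty)) addr0 -subr_via.
by have := active_lin_le0 pL act (S1P S1x1); nra.
Qed.

Lemma active_lin_n1_le0 p : p \in L -> lin p.1 y = p.2 -> lin p.1 u1 = 0 ->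
  lin p.1 n1 <= 0.
Proof.
move=> pL act u0; case: nn1 => _ _ _ [x2 [y2 [Px2 S1y2 pos]]].
have pos2 : 0 < ip Gm n1 (x2 - y).
  by rewrite (subr_via _ _ y2) ipD (n1S1 (dir_diff S1y2 S1y)) addr0.
have := active_lin_dirP pL act (dir_diff Px2 Py); rewrite u0 mulr0 add0r.
by have := active_lin_le0 pL act Px2; nra.
Qed.

(* Otherwise y - e u1 would stay in P and in S1, on the wrong side of T. *)
Lemma exists_active_u1_lt0 : exists p, [/\ p \in L, lin p.1 y = p.2 & lin p.1 u1 < 0].
Proof.
apply: contrapT => hn.
have hw p : p \in L -> lin p.1 y = p.2 -> lin p.1 (- u1) <= 0.
  move=> pL act; rewrite linN oppr_le0.
  have := active_lin_u1_le0 pL act; rewrite le_eqVlt => /orP[/eqP -> //|lt].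
  by exfalso; apply: hn; exists p.
have [e ep /halfspacesP Pz] := halfspaces_inward (PL Py) hw.
have S1z : S1 (y + e *: - u1).
  rewrite hS1; split => //=.
  by rewrite linD linZ linN (dir_lin_eq0 S1c u1S1) oppr0 mulr0 addr0 S1c.
by have := u1_ip_ge0 S1z Ty; rewrite addrC addKr ipZ ipN u1u1; lra.
Qed.

(* The second facet is cut out by the active constraint j whose trace on the
   plane spanned by u1 and n1 turns least from the direction u1. *)
Lemma exists_second_facet_constraint : exists j, [/\ j \in L, lin j.1 y = j.2,
  lin j.1 u1 < 0 & forall p, p \in L -> lin p.1 y = p.2 ->
    lin p.1 u1 * (- lin j.1 n1 / lin j.1 u1) + lin p.1 n1 <= 0].
Proof.
pose act := [seq p <- L | (lin p.1 y == p.2) && (lin p.1 u1 < 0)].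
have ne : act != [::].
  have [p [pL py pu]] := exists_active_u1_lt0.
  have : p \in act by rewrite mem_filter py eqxx pu pL.
  by apply: contraL => /eqP ->.
have [j] := seq_argmax (fun p : V * R => - lin p.1 n1 / lin p.1 u1) ne.
rewrite mem_filter => /andP[/andP[/eqP jy ju] jL] hj.
exists j; split => // p pL py.
have [pu0|pu] := eqVneq (lin p.1 u1) 0.
  by rewrite pu0 mul0r add0r; apply: active_lin_n1_le0.
have pu_lt0 : lin p.1 u1 < 0 by rewrite lt_neqAle pu active_lin_u1_le0.
have := hj p; rewrite mem_filter py eqxx pu_lt0 pL => /(_ isT).
set xs := - lin j.1 n1 / lin j.1 u1 => h.
have e : - lin p.1 n1 / lin p.1 u1 * lin p.1 u1 = - lin p.1 n1 by rewrite divfK.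
nra.
Qed.

Definition active_sum := \sum_(p <- L | lin p.1 y == p.2) p.1.
Definition active_bound := \sum_(p <- L | lin p.1 y == p.2) p.2.

Lemma lin_active_sum x :
  lin active_sum x = \sum_(p <- L | lin p.1 y == p.2) lin p.1 x.
Proof. by rewrite /active_sum -big_filter lin_suml big_filter. Qed.

Lemma active_sum_le x : P x -> lin active_sum x <= active_bound.
Proof.
move=> Px; rewrite lin_active_sum /active_bound big_seq_cond [leRHS]big_seq_cond.
by apply: ler_sum => p /andP[pL _]; apply: PL.
Qed.

Lemma active_tight_of_sum x : P x -> lin active_sum x = active_bound ->
  forall p, p \in L -> lin p.1 y = p.2 -> lin p.1 x = p.2.
Proof.
move=> Px hx.
have : \sum_(p <- L | (p \in L) && (lin p.1 y == p.2)) (p.2 - lin p.1 x) == 0.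
  by rewrite -big_seq_cond sumrB -lin_active_sum hx subrr.
rewrite psumr_eq0 => [/allP h p pL py|p /andP[pL _]]; last first.
  by rewrite subr_ge0; apply: PL.
apply/eqP; rewrite eq_sym -subr_eq0.
by have /implyP := h p pL; rewrite pL py eqxx; apply.
Qed.

(* If every constraint active at y is tight at x, then y - e (x - y) stays in P,
   so the faces of P through y contain x. *)
Lemma T_active_face : T = P `&` [set x | lin active_sum x = active_bound].
Proof.
apply/seteqP; split => x.
  move=> Tx; split; first exact: TP.
  rewrite /= lin_active_sum /active_bound big_seq_cond [RHS]big_seq_cond.
  by apply: eq_bigr => p /andP[pL /eqP act]; apply: active_tight.
move=> [Px /= /(active_tight_of_sum Px) tight].
have hw p : p \in L -> lin p.1 y = p.2 -> lin p.1 (y - x) <= 0.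
  by move=> pL act; rewrite linB act tight // subrr.
have [e ep /halfspacesP Pz] := halfspaces_inward (PL Py) hw.
have psix : lin psi x = c.
  by have := hpsi Pz; have := hpsi Px; rewrite linD linZ linB (S1c S1y); nra.
have S1x : S1 x by rewrite hS1.
have S1z : S1 (y + e *: (y - x)).
  rewrite hS1; split => //=.
  by rewrite linD linZ linB (S1c S1y) psix subrr mulr0 addr0.
rewrite hT; split => //=.
by have := hphi S1z; have := hphi S1x; rewrite linD linZ linB (Tb Ty); nra.
Qed.

Lemma lin_face_u1_le0 a a0 : (forall x, P x -> lin a x <= a0) -> lin a y = a0 ->
  lin a u1 <= 0.
Proof.
move=> ha ay; have [e ep /halfspacesP Pz] :=
  halfspaces_inward (PL Py) (@active_lin_u1_le0).
by have := ha _ Pz; rewrite linD linZ ay; nra.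
Qed.

Section SecondFacet.
Variable j : V * R.
Hypothesis jL : j \in L.
Hypothesis jy : lin j.1 y = j.2.
Hypothesis ju : lin j.1 u1 < 0.
Let xs := - lin j.1 n1 / lin j.1 u1.
Hypothesis jmax : forall p, p \in L -> lin p.1 y = p.2 ->
  lin p.1 u1 * xs + lin p.1 n1 <= 0.

(* q2 spans the trace of the second facet on the plane of u1 and n1. *)
Let q2 := xs *: u1 + n1.
Let S2 := P `&` [set x | lin j.1 x = j.2].
Let S2P : S2 `<=` P. Proof. by move=> x []. Qed.
Let S2j x : S2 x -> lin j.1 x = j.2. Proof. by case. Qed.

Lemma lin_j_n1 : lin j.1 n1 = - (lin j.1 u1 * xs).
Proof. by rewrite /xs; field; rewrite lt_eqF. Qed.

Lemma lin_j_q2 : lin j.1 q2 = 0.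
Proof. by rewrite linD linZ lin_j_n1; ring. Qed.

Lemma ip_q2_dirT w : dir T w -> ip Gm q2 w = 0.
Proof. by move=> Tw; rewrite (ipDl Gsym) (ipZl Gsym) (u1T Tw) (n1T Tw); ring. Qed.

Lemma ip_span_q2 (a1 b1 : R) : ip Gm (a1 *: u1 + b1 *: n1) q2 = a1 * xs + b1.
Proof. by rewrite /q2 -[n1 in X in ip Gm _ X]scale1r ip_span_u1n1 mulr1. Qed.

Lemma ip_q2q2 : ip Gm q2 q2 = xs ^+ 2 + 1.
Proof. by rewrite {1}/q2 -[n1 in ip Gm (_ + n1)]scale1r ip_span_q2; ring. Qed.

Lemma ip_q2q2_gt0 : 0 < ip Gm q2 q2.
Proof. by rewrite ip_q2q2 ltr_wpDl ?sqr_ge0. Qed.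

Lemma exists_step_q2 : exists2 e : R, 0 < e & P (y + e *: q2).
Proof.
have hw p : p \in L -> lin p.1 y = p.2 -> lin p.1 q2 <= 0.
  by move=> pL act; rewrite linD linZ mulrC; apply: jmax.
by have [e ep /halfspacesP] := halfspaces_inward (PL Py) hw; exists e.
Qed.

Lemma lin_face_q2_le0 a a0 : (forall x, P x -> lin a x <= a0) -> lin a y = a0 ->
  lin a q2 <= 0.
Proof.
move=> ha ay; have [e ep Pz] := exists_step_q2.
by have := ha _ Pz; rewrite linD linZ ay; nra.
Qed.

Lemma T_sub_S2 : T `<=` S2.
Proof. by move=> x Tx; split; [exact: TP|exact: active_tight]. Qed.

Lemma dir_S2_q2 : dir S2 q2.
Proof.
have [e ep Pz] := exists_step_q2.
have S2z : S2 (y + e *: q2) by split => //=; rewrite linD linZ lin_j_q2 mulr0 addr0.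
have := dirZ e^-1 (dir_diff S2z (T_sub_S2 Ty)).
by rewrite addrC addKr scalerA mulVf ?scale1r // gt_eqF.
Qed.

Lemma dirS2_decomp z : dir S2 z ->
  exists2 zT, dir T zT & z = zT + ip Gm n1 z *: q2.
Proof.
move=> S2z; have Pz : dir P z by apply: (dir_mono S2P).
have [zT Tz hz] := dirP_decomp Pz; exists zT => //.
have h0 : lin j.1 z = 0 := dir_lin_eq0 S2j S2z.
rewrite (active_lin_dirP jL jy Pz) lin_j_n1 in h0.
have e : ip Gm u1 z = xs * ip Gm n1 z.
  by apply: (mulfI (negbT (lt_eqF ju))); apply: subr0_eq; rewrite -h0; ring.
by rewrite {1}hz e /q2 scalerDr scalerA addrA (mulrC xs).
Qed.

Lemma has_dim_S2 : has_dim S2 d.+1.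
Proof.
exact: (has_dim_orth_ext dT (dir_mono T_sub_S2) dir_S2_q2 ip_q2_dirT
  ip_q2q2_gt0 dirS2_decomp).
Qed.

Lemma S2_neq_S1 : S2 <> S1.
Proof.
move=> e; have [e' e'p Pz] := exists_step_q2.
have S2z : S2 (y + e' *: q2) by split => //=; rewrite linD linZ lin_j_q2 mulr0 addr0.
rewrite e in S2z; have := n1S1 (dir_diff S2z S1y).
rewrite addrC addKr ipZ /q2 ipD ipZ (ipC Gsym n1 u1) ip_u1n1 n1n1; lra.
Qed.

Lemma u1_n1_cone x : P x -> 0 <= ip Gm u1 (x - y) - xs * ip Gm n1 (x - y).
Proof.
move=> Px; have := active_lin_le0 jL jy Px.
rewrite (active_lin_dirP jL jy (dir_diff Px Py)) lin_j_n1.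
set al := ip Gm u1 (x - y); set be := ip Gm n1 (x - y).
have -> : al * lin j.1 u1 + be * - (lin j.1 u1 * xs) =
  lin j.1 u1 * (al - xs * be) by ring.
by have := ju; nra.
Qed.

Lemma T_face_S2 : (forall x, S2 x -> lin active_sum x <= active_bound) /\
  T = S2 `&` [set x | lin active_sum x = active_bound].
Proof.
split; first by move=> x /S2P; apply: active_sum_le.
rewrite {1}T_active_face; apply/seteqP; split => x [Px hx]; split => //.
  by split => //; apply: S2j; apply: T_sub_S2; rewrite T_active_face.
exact: S2P.
Qed.

Lemma unit_normal_S2T u2 : unit_normal Gm S2 T u2 ->
  exists2 la, 0 < la & la ^+ 2 * (xs ^+ 2 + 1) = 1 /\ u2 = la *: q2.
Proof.
move=> [S2u2 u2T u2u2 [x [y' [S2x Ty' pos]]]].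
have [zT Tz hu2] := dirS2_decomp S2u2; set la := ip Gm n1 u2 in hu2.
have zT0 := dir_orth_eq0 Gip Tz u2T ip_q2_dirT hu2; rewrite zT0 add0r in hu2.
have [zT' Tz' hx] := dirS2_decomp (dir_diff S2x (T_sub_S2 Ty')).
set bb := ip Gm n1 (x - y') in hx.
have bb0 : 0 <= bb := n1_ip_ge0 (S2P S2x) (TS1 Ty').
have : ip Gm u2 (x - y') = la * (bb * ip Gm q2 q2).
  by rewrite hu2 hx (ipZl Gsym) ipD ipZ (ip_q2_dirT Tz') add0r.
move: pos => /[swap] -> pos; exists la; last split => //.
  by have := mulr_ge0 bb0 (ltW ip_q2q2_gt0); nra.
by move: u2u2; rewrite hu2 (ipZl Gsym) ipZ ip_q2q2 => h; rewrite -[RHS]h; ring.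
Qed.

Lemma unit_normal_PS2 n2 : unit_normal Gm P S2 n2 -> exists2 al, 0 < al &
  al ^+ 2 * (xs ^+ 2 + 1) = 1 /\ n2 = al *: u1 + (- (al * xs)) *: n1.
Proof.
move=> [Pn2 n2S2 n2n2 [x [y' [Px S2y' pos]]]].
have n2T w : dir T w -> ip Gm n2 w = 0 by move/(dir_mono T_sub_S2)/n2S2.
have hn2 := dirP_orthT_decomp Pn2 n2T.
set al := ip Gm u1 n2 in hn2; set be := ip Gm n1 n2 in hn2.
have hbe : be = - (al * xs) by have := n2S2 _ dir_S2_q2; rewrite hn2 ip_span_q2; lra.
rewrite hbe in hn2; exists al; last split => //.
  have : ip Gm n2 (x - y') = al * (ip Gm u1 (x - y) - xs * ip Gm n1 (x - y)).
    rewrite (subr_via x y' y) [ip Gm n2 _]ipD.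
    rewrite (n2S2 _ (dir_diff (T_sub_S2 Ty) S2y')) addr0.
    by rewrite hn2 (ipDl Gsym) !(ipZl Gsym); ring.
  by move: pos => /[swap] ->; have := u1_n1_cone Px; nra.
by move: n2n2; rewrite hn2 ip_span_u1n1 => h; rewrite -[RHS]h; ring.
Qed.

(* In the basis (u1, n1): n1 (x) u1 + n2 (x) u2 has off-diagonal entries
   la^2 and 1 - la^2 xs^2, which agree because la^2 (xs^2 + 1) = 1. *)
Lemma normal_tensor_sym u2 n2 : unit_normal Gm S2 T u2 -> unit_normal Gm P S2 n2 ->
  forall a a' : V, lin a n1 * lin a' u1 + lin a n2 * lin a' u2 =
                   lin a' n1 * lin a u1 + lin a' n2 * lin a u2.
Proof.
move=> /unit_normal_S2T [la la0 [hla ->]] /unit_normal_PS2 [al al0 [hal ->]] a a'.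
have kpos : 0 < xs ^+ 2 + 1 by rewrite ltr_wpDl ?sqr_ge0.
have -> : al = la.
  apply/eqP; rewrite -(eqrXn2 (n := 2)) ?ltW //; apply/eqP.
  by apply: (mulIf (lt0r_neq0 kpos)); rewrite hal hla.
rewrite /q2 !(linD, linZ); apply/eqP; rewrite -subr_eq0; apply/eqP.
set A1 := lin a u1; set A2 := lin a n1; set B1 := lin a' u1; set B2 := lin a' n1.
transitivity ((A2 * B1 - B2 * A1) * (1 - la ^+ 2 * (xs ^+ 2 + 1))); first ring.
by rewrite hla subrr mulr0.
Qed.

Lemma facet_normal_cone S u : S `<=` P -> T `<=` S -> has_dim S d.+1 ->
  unit_normal Gm S T u ->
  exists t be, [/\ 0 <= t, 0 <= be & u = t *: u1 + be *: q2].
Proof.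
move=> SP TS dS [Su uT uu [x [y' [Sx Ty' pos]]]].
have Sy := TS _ Ty.
have hu := dirP_orthT_decomp (dir_mono SP Su) uT.
set al := ip Gm u1 u in hu; set be := ip Gm n1 u in hu.
have [w Tw hxy] := orth_decomp1 dT dS (dir_mono TS) Su uT uu (dir_diff Sx Sy).
set ga := ip Gm u (x - y) in hxy.
have ga0 : 0 < ga.
  by rewrite /ga (subr_via _ _ y') ipD (uT _ (dir_diff Ty' Ty)) addr0.
have eu1 : ip Gm u1 (x - y) = ga * al by rewrite hxy ipD (u1T Tw) add0r ipZ.
have en1 : ip Gm n1 (x - y) = ga * be by rewrite hxy ipD (n1T Tw) add0r ipZ.
exists (al - xs * be), be; split.
- by have := u1_n1_cone (SP _ Sx); rewrite eu1 en1; nra.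
- by have := n1_ip_ge0 (SP _ Sx) S1y; rewrite en1; nra.
- by rewrite {1}hu /q2 scalerDr scalerA scalerBl (mulrC be xs) addrA subrK.
Qed.

Lemma face_eq_P S psi' c' : S = P `&` [set x | lin psi' x = c'] -> T `<=` S ->
  lin psi' u1 = 0 -> lin psi' q2 = 0 -> S = P.
Proof.
move=> hS TS psiu1 psiq2; have SP : S `<=` P by rewrite hS => z [].
have Sy := TS _ Ty; have Sc z : S z -> lin psi' z = c' by rewrite hS => -[].
have psin1 : lin psi' n1 = 0 by move: psiq2; rewrite linD linZ psiu1 mulr0 add0r.
apply/seteqP; split => //.
apply: (face_sub (@subset_refl _ P) Py hS Sy) => z /dirP_decomp [zT Tz ->].
rewrite !linD !linZ psiu1 psin1 !mulr0 !addr0.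
exact: (dir_lin_eq0 Sc (dir_mono TS Tz)).
Qed.

(* A face of P through T with normal t u1 + be q2 is S1 if be = 0, S2 if t = 0,
   and all of P if both are positive. *)
Lemma facet_through_T S psi' c' u : (forall x, P x -> lin psi' x <= c') ->
  S = P `&` [set x | lin psi' x = c'] -> T `<=` S -> has_dim S d.+1 ->
  unit_normal Gm S T u -> S = S1 \/ S = S2.
Proof.
move=> hpsi' hS TS dS nu; have SP : S `<=` P by rewrite hS => z [].
have [t [be [t0 be0 hu]]] := facet_normal_cone SP TS dS nu.
have [Su uT uu _] := nu.
have Sy := TS _ Ty; have Sc z : S z -> lin psi' z = c' by rewrite hS => -[].
have psiT w : dir T w -> lin psi' w = 0 by move/(dir_mono TS)/(dir_lin_eq0 Sc).
have psiu1 := lin_face_u1_le0 hpsi' (Sc _ Sy).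
have psiq2 := lin_face_q2_le0 hpsi' (Sc _ Sy).
have key : t * lin psi' u1 + be * lin psi' q2 = 0.
  by rewrite -!linZ -linD -hu (dir_lin_eq0 Sc Su).
have dirS_decomp := orth_decomp1 dT dS (dir_mono TS) Su uT uu.
have [be_eq0|be_ne0] := eqVneq be 0.
  have t_ne0 : t != 0.
    apply/eqP => t_eq0; move: uu; rewrite hu t_eq0 be_eq0 !scale0r addr0 ip0.
    by move/esym/eqP; rewrite oner_eq0.
  have psiu1_0 : lin psi' u1 = 0.
    by apply: (mulfI t_ne0); rewrite mulr0 -key be_eq0 mul0r addr0.
  have psi_u : lin psi u = 0.
    by rewrite hu be_eq0 scale0r addr0 linZ (dir_lin_eq0 S1c u1S1) mulr0.
  left; apply/seteqP; split.
    apply: (face_sub SP Sy hS1 S1y); apply: (lin_eq0_on_span psi_u _ dirS_decomp).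
    by move=> w /(dir_mono TS1)/(dir_lin_eq0 S1c).
  apply: (face_sub S1P S1y hS Sy); apply: (lin_eq0_on_span psiu1_0 psiT).
  exact: (orth_decomp1 dT dS1 (dir_mono TS1) u1S1 u1T u1u1).
have [t_eq0|t_ne0] := eqVneq t 0.
  have psiq2_0 : lin psi' q2 = 0.
    by apply: (mulfI be_ne0); rewrite mulr0 -key t_eq0 mul0r add0r.
  have ju0 : lin j.1 u = 0 by rewrite hu t_eq0 scale0r add0r linZ lin_j_q2 mulr0.
  right; apply/seteqP; split.
    apply: (face_sub SP Sy erefl (T_sub_S2 Ty)).
    exact: (lin_eq0_on_span ju0 (active_lin_dirT jL jy) dirS_decomp).
  apply: (face_sub S2P (T_sub_S2 Ty) hS Sy).
  exact: (lin_eq0_on_span psiq2_0 psiT dirS2_decomp).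
have psiu1_0 : lin psi' u1 = 0.
  by apply/eqP; rewrite eq_le psiu1 /=; move: t_ne0 be_ne0; rewrite !neq_lt; nra.
have psiq2_0 : lin psi' q2 = 0 by move: key; rewrite psiu1_0 mulr0 add0r; nra.
have := has_dim_uniq dS; rewrite (face_eq_P hS TS psiu1_0 psiq2_0).
by move=> /(_ _ dP) /n_Sn.
Qed.

End SecondFacet.
End RelativeInterior.

Lemma codim2_second_facet : exists S2 : set V,
  [/\ (exists psi2 c2, (forall x, P x -> lin psi2 x <= c2) /\
                       S2 = P `&` [set x | lin psi2 x = c2]),
      (exists phi2 b2, (forall x, S2 x -> lin phi2 x <= b2) /\
                       T = S2 `&` [set x | lin phi2 x = b2]),
      has_dim S2 d.+1, S2 <> S1 &
      (forall u2 n2, unit_normal Gm S2 T u2 -> unit_normal Gm P S2 n2 ->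
         forall a a', lin a n1 * lin a' u1 + lin a n2 * lin a' u2 =
                      lin a' n1 * lin a u1 + lin a' n2 * lin a u2) /\
      (forall S psi' c' u, (forall x, P x -> lin psi' x <= c') ->
         S = P `&` [set x | lin psi' x = c'] -> T `<=` S -> has_dim S d.+1 ->
         unit_normal Gm S T u -> S = S1 \/ S = S2)].
Proof.
have [y0 Ty0] : T !=set0.
  by case: nu1 => _ _ _ [_ [y0 [_ Ty0 _]]]; exists y0.
have [y [Ty yrel]] := exists_relint_T Ty0.
have [j [jL jy ju jmax]] := exists_second_facet_constraint Ty yrel.
exists (P `&` [set x | lin j.1 x = j.2]); split.
- by exists j.1, j.2; split => // x Px; apply: PL.
- by have [? ?] := T_face_S2 Ty yrel jL jy; exists (active_sum y), (active_bound y).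
- exact: has_dim_S2 jmax.
- exact: S2_neq_S1 jmax.
- split; first exact: normal_tensor_sym jmax.
  exact: facet_through_T jmax.
Qed.

End CodimTwo.

Section Faces.
Context {R : realType} {n : nat} {X : topologicalType}.
Local Notation V := 'rV[R]_n.
Variable iota : X -> V.

Lemma image_face (sg s : set X) (F : set V) : F `<=` iota @` sg ->
  s = sg `&` iota @^-1` F -> iota @` s = F.
Proof.
move=> Fsg ->; apply/seteqP; split => [v [x [_ Fx] <-] //|v Fv].
by have [x sx ex] := Fsg _ Fv; exists x => //; split; rewrite // /preimage /= ex.
Qed.

Lemma faceX_sub s t : faceX iota s t -> t `<=` s.
Proof. by move=> [F [_ ->]] x []. Qed.

Lemma faceX_image s t : faceX iota s t -> exists psi c,
  [/\ forall x, (iota @` s) x -> lin psi x <= c,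
      iota @` t = iota @` s `&` [set x | lin psi x = c] &
      t = s `&` iota @^-1` (iota @` t)].
Proof.
move=> [F [[psi [c [hle hF]]] ht]].
have FS : F `<=` iota @` s by rewrite hF => x [].
by exists psi, c; split; rewrite ?(image_face FS ht).
Qed.

Lemma unit_normal_image (Gm : 'M[R]_n) s t v : is_normal_vector iota Gm s t v ->
  unit_normal Gm (iota @` s) (iota @` t) v.
Proof.
move=> [h1 h2 h3 [x [y [sx ty p]]]]; split => //.
by exists (iota x), (iota y); split; [exists x|exists y|].
Qed.

Variable Pi : set (set X).
Hypothesis hC : euclidean_polyhedral_complex iota Pi.

Lemma facet_of_image_facet sg t (S : set V) psi c phi b d :
  Pi sg -> t `<=` sg -> t !=set0 ->
  (forall x, (iota @` sg) x -> lin psi x <= c) ->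
  S = iota @` sg `&` [set x | lin psi x = c] ->
  (forall x, S x -> lin phi x <= b) -> iota @` t = S `&` [set x | lin phi x = b] ->
  dimX iota t d -> has_dim S d.+1 -> dimX iota sg d.+2 ->
  let s := sg `&` iota @^-1` S in
  [/\ Pi s, iota @` s = S, facet iota t s & facet iota s sg].
Proof.
move=> Psg tsg tne hpsi hS hphi hT dt dS dsg s.
have [_ _ polyP faceP _] := hC; have [_ inj _ _] := polyP sg Psg.
have es : iota @` s = S by apply: image_face => //; rewrite hS => x [].
have Ts : iota @` t `<=` S by rewrite hT => x [].
have ts : t = s `&` iota @^-1` (iota @` t).
  apply/seteqP; split => [x tx|x [[sgx _] [x' tx' e]]].
    by split; [split; [exact: tsg|apply: Ts; exists x]|exists x].
  by rewrite -(inj _ _ (tsg _ tx') sgx e).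
have fts : faceX iota s t.
  by exists (iota @` t); split => //; rewrite es; exists phi, b.
have [x tx] := tne.
have sne : s !=set0 by exists x; move: tx; rewrite {1}ts => -[].
split => //.
- by apply: faceP => //; exists psi, c.
- by split => //; split => //; exists d; split => //; rewrite /dimX es.
- split; first by exists S; split => //; exists psi, c.
  by split => //; exists d.+1; split => //; rewrite /dimX es.
Qed.

Variable Gm : 'M[R]_n.
Hypothesis Gip : is_inner_product Gm.
Variable nu : set X -> set X -> V.
Hypothesis hnu : forall s t, Pi s -> Pi t -> facet iota t s ->
  is_normal_vector iota Gm s t (nu s t).

Lemma codim2_facets sg s1 t : Pi sg -> Pi s1 -> Pi t ->
  facet iota t s1 -> facet iota s1 sg ->
  exists s2, [/\ Pi s2, facet iota t s2, facet iota s2 sg, s2 <> s1 &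
    (forall s, Pi s -> facet iota t s -> facet iota s sg -> s = s1 \/ s = s2) /\
    forall a a',
      lin a (nu sg s1) * lin a' (nu s1 t) + lin a (nu sg s2) * lin a' (nu s2 t) =
      lin a' (nu sg s1) * lin a (nu s1 t) + lin a' (nu sg s2) * lin a (nu s2 t)].
Proof.
move=> Psg Ps1 Pt fts1 fs1sg.
have [fts1' [tne [d [dt ds1]]]] := fts1.
have [fs1sg' [_ [d' [ds1' dsg]]]] := fs1sg.
have dd : d' = d.+1 := has_dim_uniq ds1' ds1; subst d'.
have [_ _ polyP _ _] := hC; have [[L hL] _ _ _] := polyP sg Psg.
have [psi [c [hpsi hS1 es1]]] := faceX_image fs1sg'.
have [phi [b [hphi hT _]]] := faceX_image fts1'.
have [S2 [[psi2 [c2 [hpsi2 hS2]]] [phi2 [b2 [hphi2 hT2]]] dS2 S2S1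
    [tensor_sym facets]]] :=
  codim2_second_facet Gip hL hpsi hS1 hphi hT dt ds1 dsg
    (unit_normal_image (hnu Ps1 Pt fts1)) (unit_normal_image (hnu Psg Ps1 fs1sg)).
have tsg : t `<=` sg by move=> x /(faceX_sub fts1') /(faceX_sub fs1sg').
have [Ps2 es2 fts2 fs2sg] :=
  facet_of_image_facet Psg tsg tne hpsi2 hS2 hphi2 hT2 dt dS2 dsg.
exists (sg `&` iota @^-1` S2); split => //.
  by move=> e; apply: S2S1; rewrite -es2 e.
split.
  move=> s Ps fts [fssg' [_ [d3 [ds3 dsg3]]]].
  have d3e : d3 = d.+1 by have [] := has_dim_uniq dsg3 dsg.
  subst d3; have [psi' [c' [hpsi' hS' es]]] := faceX_image fssg'.
  have Ts : iota @` t `<=` iota @` s.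
    by move=> v [x tx <-]; exists x => //; apply: (faceX_sub fts.1).
  have [e|e] := facets _ _ _ _ hpsi' hS' Ts ds3 (unit_normal_image (hnu Ps Pt fts)).
    by left; rewrite es e -es1.
  by right; rewrite es e.
have u2 := unit_normal_image (hnu Ps2 Pt fts2).
have n2 := unit_normal_image (hnu Psg Ps2 fs2sg).
by rewrite es2 in u2 n2; apply: tensor_sym.
Qed.

End Faces.

Section OpenPart.
Context {R : realType} {n : nat} {X : topologicalType}.
Local Notation V := 'rV[R]_n.

Lemma halfspaces_segment (L : seq (V * R)) z p (eps : R) :
  halfspaces L z -> halfspaces L p -> 0 <= eps <= 1 ->
  halfspaces L (z + eps *: (p - z)).
Proof.
move=> Lz Lp /andP[e0 e1] q hq; have := Lz q hq; have := Lp q hq.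
by rewrite linD linZ linB; nra.
Qed.

Lemma ball_segment (z p : V) (e : R) : 0 < e ->
  exists2 eps : R, 0 < eps <= 1 & ball z e (z + eps *: (p - z)).
Proof.
move=> e0; have de : 0 < e + `|p - z| by rewrite ltr_wpDr.
exists (e / (e + `|p - z|)).
  by rewrite divr_gt0 //= ler_pdivrMr // mul1r lerDl.
rewrite -ball_normE /ball_ /= opprD addNKr normrN normrZ gtr0_norm ?divr_gt0 //.
by rewrite mulrAC ltr_pdivrMr // ltr_pM2l // ltrDr.
Qed.

(* iota(s) is convex and g is continuous at iota z, so a short segment from
   iota z towards iota x stays in iota(s /\ U), where H vanishes. *)
Lemma additive_eq0_of_open_part (iota : X -> V) (s U : set X) (H : V -> R)
    (L : seq (V * R)) (g : V -> X) :
  iota @` s = halfspaces L -> (forall x, s x -> g (iota x) = x) ->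
  {within iota @` s, continuous g} -> open U ->
  (forall u v, H (u + v) = H u + H v) -> (forall r u, H (r *: u) = r * H u) ->
  (forall x, s x -> U x -> H (iota x) = 0) -> s `&` U !=set0 ->
  forall x, s x -> H (iota x) = 0.
Proof.
move=> hA hg cg oU hD hZ h0 [z [sz Uz]] x sx.
have Az : (iota @` s) (iota z) by exists z.
have := (subspace_continuousP _ _).1 cg (iota z) Az.
rewrite /from_subspace hg // => /(_ U (open_nbhs_nbhs (conj oU Uz))).
rewrite /= nbhs_simpl /= /within /= => /nbhs_ballP [e e0 he].
have [eps /andP[eps0 eps1] Bq] := ball_segment (iota z) (iota x) e0.
set q := iota z + eps *: (iota x - iota z) in Bq.
have [xq sxq exq] : (iota @` s) q.
  rewrite hA; apply: halfspaces_segment; rewrite ?eps1 ?ltW // -hA.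
  - by exists z.
  - by exists x.
have Ugq : U xq by have := he _ Bq; rewrite -exq /preimage /= hg //; apply; exists xq.
have := h0 _ sxq Ugq; rewrite exq /q hD hZ -scaleN1r hD hZ h0 // mulr0 addr0 add0r.
by move/eqP; rewrite mulf_eq0 gt_eqF //= => /eqP.
Qed.

Lemma linear_choice_agree (iota : X -> V) Pi U (f : X -> R) Fa s sg :
  euclidean_polyhedral_complex iota Pi -> open U -> linear_choice iota Pi U f Fa ->
  restr Pi U s -> restr Pi U sg -> s `<=` sg ->
  forall v, dir (iota @` s) v -> lin (Fa s) v = lin (Fa sg) v.
Proof.
move=> [_ _ polyP _ _] oU lf rs rsg ssg.
have [[Ls hLs] _ _ [g [hg cg]]] := polyP s rs.1.
pose H v := lin (Fa s) v - lin (Fa sg) v.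
have hD u v : H (u + v) = H u + H v by rewrite /H !linD; ring.
have hZ r u : H (r *: u) = r * H u by rewrite /H !linZ; ring.
have h0 x : s x -> U x -> H (iota x) = 0.
  by move=> sx Ux; rewrite /H -(lf _ rs x sx Ux) -(lf _ rsg x (ssg _ sx) Ux) subrr.
have hs := additive_eq0_of_open_part hLs hg cg oU hD hZ h0 rs.2.
move=> v /(dir_additive_eq0 hD hZ) Hv; apply/eqP; rewrite -subr_eq0; apply/eqP.
apply: Hv => _ _ [x sx <-] [y sy <-].
by rewrite -scaleN1r hD hZ !hs // mulr0 addr0.
Qed.

End OpenPart.

Lemma fsbig_fset_set_if (R : nmodType) (T : choiceType) (A D : set T) (F : T -> R) :
  finite_set D -> A `<=` D ->
  \sum_(i \in A) F i = \sum_(i <- fset_set D) (if `[< A i >] then F i else 0).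
Proof.
move=> fD AD; rewrite (eq_fsbigr (fun i => if `[< A i >] then F i else 0)); last first.
  by move=> i; rewrite in_setE => Ai; rewrite asboolT.
rewrite (fsbig_widen A D) //; first exact: fsbig_finite.
by move=> i [Di nAi] /=; case: asboolP.
Qed.

Lemma big_if_pair (R : nmodType) (T : eqType) (r : seq T) (Q : T -> Prop)
    (h : T -> R) a b :
  uniq r -> a \in r -> b \in r -> a != b -> Q a -> Q b ->
  (forall s, Q s -> s = a \/ s = b) ->
  \sum_(s <- r) (if `[< Q s >] then h s else 0) = h a + h b.
Proof.
move=> ur ar br ab Qa Qb hQ.
rewrite (bigD1_seq a) //= asboolT // -big_filter (bigD1_seq b) ?filter_uniq //;
  last by rewrite mem_filter eq_sym ab.
rewrite asboolT // big_seq_cond big1 /= ?addr0 // => s /andP[].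
rewrite mem_filter => /andP[sa _] sb.
by case: asboolP => // /hQ [e|e]; rewrite e eqxx in sa sb.
Qed.

Section Products.
Context {R : realType} {n : nat} {X : topologicalType}.
Local Notation V := 'rV[R]_n.
Variables (iota : X -> V) (Gm : 'M[R]_n) (Pi : set (set X)) (U : set X).
Variables (nu : set X -> set X -> V) (k : nat).
Hypothesis Gip : is_inner_product Gm.
Hypothesis hC : euclidean_polyhedral_complex iota Pi.
Hypothesis oU : open U.
Hypothesis hnu : forall s t, Pi s -> Pi t -> facet iota t s ->
  is_normal_vector iota Gm s t (nu s t).

Definition flag (t s sg : set X) : Prop :=
  [/\ restr Pi U s, dimX iota s k.-1 & facet iota t s] /\
  [/\ restr Pi U sg, dimX iota sg k & facet iota s sg].

Lemma facet_sub t s : facet iota t s -> t `<=` s.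
Proof. by case=> /faceX_sub. Qed.

Lemma wprod_wprodE (Fa Ga : set X -> V) c t (D : set (set X)) : finite_set D ->
  (forall s, Pi s -> t `<=` s -> D s) ->
  wprod iota Pi U nu k.-1 Fa (wprod iota Pi U nu k Ga c) t =
  \sum_(s <- fset_set D) \sum_(sg <- fset_set D) (if `[< flag t s sg >] then
     c sg * lin (Ga sg) (nu sg s) * lin (Fa s) (nu s t) else 0).
Proof.
move=> finD hD.
have lowD s : [/\ restr Pi U s, dimX iota s k.-1 & facet iota t s] -> D s.
  by move=> [[Ps _] _ /facet_sub ts]; apply: hD.
rewrite /wprod (fsbig_fset_set_if _ finD lowD) -sumrN.
apply: eq_bigr => s _; case: asboolP => [low|nlow]; last first.
  by rewrite oppr0 big1 // => sg _; case: asboolP => // -[].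
have upD sg : [/\ restr Pi U sg, dimX iota sg k & facet iota s sg] -> D sg.
  have [_ _ /facet_sub ts] := low.
  by move=> [[Psg _] _ /facet_sub ssg]; apply: hD => // x /ts /ssg.
rewrite (fsbig_fset_set_if _ finD upD) mulNr opprK mulr_suml.
apply: eq_bigr => sg _; case: asboolP => [up|nup]; first by rewrite asboolT.
by rewrite mul0r asboolF // => -[].
Qed.

Lemma flag_agree f Fa t s sg : linear_choice iota Pi U f Fa -> Pi t -> flag t s sg ->
  lin (Fa s) (nu s t) = lin (Fa sg) (nu s t).
Proof.
move=> lf Pt [[rs _ fts] [rsg _ fssg]].
apply: (linear_choice_agree hC oU lf rs rsg (facet_sub fssg)).
by case: (hnu rs.1 Pt fts).
Qed.

Lemma flag_sum_sym f g Fa Ga c t sg (r : seq (set X)) :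
  linear_choice iota Pi U f Fa -> linear_choice iota Pi U g Ga ->
  restr Pi U t -> uniq r -> (forall s, flag t s sg -> s \in r) ->
  \sum_(s <- r) (if `[< flag t s sg >] then
     c sg * lin (Ga sg) (nu sg s) * lin (Fa s) (nu s t) else 0) =
  \sum_(s <- r) (if `[< flag t s sg >] then
     c sg * lin (Fa sg) (nu sg s) * lin (Ga s) (nu s t) else 0).
Proof.
move=> lf lg [Pt [x0 [tx0 Ux0]]] ur inr.
have [[s1 fl1]|none] := pselect (exists s, flag t s sg); last first.
  by rewrite !big1 // => s _; case: asboolP => // fl; case: none; exists s.
have [[rs1 ds1 fts1] [rsg dsg fs1sg]] := fl1.
have [s2 [Ps2 fts2 fs2sg s21 [two sym]]] :=
  codim2_facets hC Gip hnu rsg.1 rs1.1 Pt fts1 fs1sg.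
have fl2 : flag t s2 sg.
  split; split => //.
    by split => //; exists x0; split => //; apply: (facet_sub fts2).
  have [_ [_ [d [dt ds]]]] := fts1; have [_ [_ [d' [dt' ds']]]] := fts2.
  by rewrite (has_dim_uniq ds1 ds) (has_dim_uniq dt dt').
have two' s : flag t s sg -> s = s1 \/ s = s2.
  by move=> [[rs _ fts] [_ _ fssg]]; apply: two => //; case: rs.
have s12 : s1 != s2 by apply/eqP => e; apply: s21; rewrite e.
rewrite !(big_if_pair _ ur (inr _ fl1) (inr _ fl2) s12 fl1 fl2 two').
rewrite !(flag_agree lf Pt fl1) !(flag_agree lf Pt fl2).
rewrite !(flag_agree lg Pt fl1) !(flag_agree lg Pt fl2).
by rewrite -!mulrA -!mulrDr sym.
Qed.

End Products.

Theorem proposition3p10 (R : realType) (n : nat) (X : topologicalType)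
  (iota : X -> 'rV[R]_n) (Gm : 'M[R]_n) (Pi : set (set X)) (U : set X)
  (nu : set X -> set X -> 'rV[R]_n)
  (f g : X -> R) (Fa Ga : set X -> 'rV[R]_n) (k : nat) (c : set X -> R) :
  euclidean_space_data iota Gm ->
  euclidean_polyhedral_complex iota Pi ->
  open U ->
  (forall s t, Pi s -> Pi t -> facet iota t s -> is_normal_vector iota Gm s t (nu s t)) ->
  piecewise_affine iota Pi U f -> piecewise_affine iota Pi U g ->
  linear_choice iota Pi U f Fa -> linear_choice iota Pi U g Ga ->
  is_weight iota Pi U k c ->
  forall t, restr Pi U t ->
    wprod iota Pi U nu k.-1 Fa (wprod iota Pi U nu k Ga c) t =
    wprod iota Pi U nu k.-1 Ga (wprod iota Pi U nu k Fa c) t.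
Proof.
move=> [_ Gip _] hC oU hnu _ _ lf lg _ t rt.
have [_ [x0 [tx0 _]]] := rt.
have [[_ /(_ x0) [W [_ Wx0 finW]]] _ _ _ _] := hC.
have hD s : Pi s -> t `<=` s -> [set s | Pi s /\ s `&` W !=set0] s.
  by move=> Ps ts; split => //; exists x0; split => //; apply: ts.
rewrite !(wprod_wprodE _ _ _ _ _ _ _ finW hD) exchange_big [RHS]exchange_big.
apply: eq_bigr => sg _; apply: (flag_sum_sym Gip hC oU hnu _ lf lg rt (fset_uniq _)).
move=> s [[[Ps _] _ /facet_sub ts] _].
by rewrite in_fset_set // in_setE; apply: hD.
Qed.
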